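(* Let $R$ be a commutative ring with unity. If $r\in R$ is B-irreducible, then $r$ is F-irreducible.
   Context: A non-zero, non-unit element $r\in R$ is called B-irreducible if the principal ideal $(r)$ is a maximal element, with respect to inclusion, of the set of all proper principal ideals of $R$. A factorization of $r$ is an expression $r=a_1\cdots a_n$ with $a_i\in R$; a refinement of this factorization is a factorization obtained by replacing one or more of the factors $a_i$ by a factorization of $a_i$. A non-unit element $r\in R$ is called F-irreducible if every factorization of $r$ has a refinement in which $r$ appears as one of the new factors. *)

From mathcomp Require Import all_boot all_algebra.
Set Implicit Arguments. Unset Strict Implicit. Unset Printing Implicit Defensive.
Import GRing.Theory.
Local Open Scope ring_scope.

Definition is_unit (R : comPzRingType) (x : R) : Prop := exists y : R, x * y = 1.

(* principal ideal inclusion: (a) ⊆ (b) iff a ∈ (b) iff a = b * c for some c *)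
Definition pideal_sub (R : comPzRingType) (a b : R) : Prop := exists c : R, a = b * c.

(* (r) is maximal among proper principal ideals; (s) is proper iff s is not a unit *)
Definition B_irreducible (R : comPzRingType) (r : R) : Prop :=
  r != 0 /\ ~ is_unit r /\
  forall s : R, ~ is_unit s -> pideal_sub r s -> pideal_sub s r.

Definition factorization (R : comPzRingType) (r : R) (s : seq R) : Prop :=
  \prod_(x <- s) x = r.

(* a refinement of the factorization s: each factor s_i is replaced by a
   factorization ts_i of s_i (the refined factorization is flatten ts);
   a factor left unchanged corresponds to ts_i = [:: s_i]. *)
Definition refinement (R : comPzRingType) (s : seq R) (ts : seq (seq R)) : Prop :=
  size ts = size s /\
  forall i, (i < size s)%N -> factorization (nth 0 s i) (nth [::] ts i).

(* every factorization has a refinement in which r is one of the new factors,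
   i.e. r occurs in the factorization substituted for some factor s_i *)
Definition F_irreducible (R : comPzRingType) (r : R) : Prop :=
  ~ is_unit r /\
  forall s : seq R, factorization r s ->
    exists ts : seq (seq R), refinement s ts /\
      exists i, (i < size s)%N /\ r \in nth [::] ts i.

(* If (r) is maximal among proper principal ideals and r = s_1 ... s_n, some
   factor s_i is a non-unit, for otherwise r would be a unit.  Since
   (r) is contained in (s_i), maximality forces (s_i) = (r), i.e. s_i = r d;
   refining the factor s_i into r * d makes r appear as a new factor. *)

From mathcomp Require Import all_boot all_algebra.
From Stdlib Require Import Classical.
Import GRing.Theory.
Local Open Scope ring_scope.

Section Factorizations.

Variable R : comPzRingType.
Implicit Types (x y : R) (s t : seq R).

Lemma is_unit_mul x y : is_unit x -> is_unit y -> is_unit (x * y).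
Proof. by move=> [x' xx'] [y' yy']; exists (x' * y'); rewrite mulrACA xx' yy' mulr1. Qed.

Lemma is_unit_prod s :
  (forall x, x \in s -> is_unit x) -> is_unit (\prod_(x <- s) x).
Proof.
move=> units_s; rewrite big_seq; apply: big_ind => //; last exact: is_unit_mul.
by exists 1; rewrite mulr1.
Qed.

Lemma nonunit_factor s :
  ~ is_unit (\prod_(x <- s) x) -> exists2 x, x \in s & ~ is_unit x.
Proof.
move=> nonunit_prod; apply: NNPP => no_nonunit; apply/nonunit_prod/is_unit_prod.
by move=> x xs; apply: NNPP => nonunit_x; apply: no_nonunit; exists x.
Qed.

Lemma pideal_sub_prod s x : x \in s -> pideal_sub (\prod_(y <- s) y) x.
Proof. by move=> xs; exists (\prod_(y <- rem x s) y); rewrite (big_rem x xs). Qed.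

Lemma refinement_set_nth s i t :
  (i < size s)%N -> factorization (nth 0 s i) t ->
  refinement s (set_nth [::] [seq [:: x] | x <- s] i t).
Proof.
move=> lt_i_s fact_t; split=> [|j lt_j_s].
  by rewrite size_set_nth size_map; apply/maxn_idPr.
rewrite nth_set_nth /=; case: eqP => [-> //|_].
by rewrite (nth_map 0) // /factorization big_seq1.
Qed.

End Factorizations.

Theorem mainTheorem3 (R : comPzRingType) (r : R) :
  B_irreducible r -> F_irreducible r.
Proof.
move=> [_ [nonunit_r maximal_r]]; split=> // s fact_s.
have [x xs nonunit_x] : exists2 x, x \in s & ~ is_unit x.
  by apply: nonunit_factor; rewrite fact_s.
have [d x_rd] : pideal_sub x r.
  by apply: maximal_r nonunit_x _; rewrite -fact_s; apply: pideal_sub_prod.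
set i := index x s; have lt_i_s : (i < size s)%N by rewrite index_mem.
have fact_rd : factorization (nth 0 s i) [:: r; d].
  by rewrite nth_index // /factorization big_cons big_seq1.
exists (set_nth [::] [seq [:: y] | y <- s] i [:: r; d]); split.
  exact: refinement_set_nth.
by exists i; rewrite nth_set_nth /= eqxx mem_head.
Qed.
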